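(* Let $f:(0,\infty)\to\mathbb R$ be convex, differentiable at $1$, with $f(1)=0$ and $f(0):=\lim_{t\to0^+}f(t)<\infty$, such that $g(t):=\frac{f(t)-f(0)}{t}$ is convex on $(0,\infty)$; assume $f(0)+f'(1)>0$. For $\xi_1\in[0,1)$, $\xi_2\in(1,\infty]$ define $$\kappa(\xi_1,\xi_2):=\sup_{t\in(\xi_1,1)\cup(1,\xi_2)}\frac{f(t)+f'(1)(1-t)}{(t-1)^2}.$$ Let $\mathcal X,\mathcal Y$ be finite or countably infinite, let $P_X\ne Q_X$ be probability mass functions with full support on $\mathcal X$, let $W_{Y|X}$ be a stochastic transformation such that every $y\in\mathcal Y$ has some $x$ with $W_{Y|X}(y|x)>0$, let $P_Y=P_XW_{Y|X}$, $Q_Y=Q_XW_{Y|X}$, and let $\xi_1:=\inf_xP_X(x)/Q_X(x)$, $\xi_2:=\sup_xP_X(x)/Q_X(x)$. Then $$\frac{D_f(P_Y\|Q_Y)}{D_f(P_X\|Q_X)}\le\frac{\kappa(\xi_1,\xi_2)}{f(0)+f'(1)}\cdot\frac{\chi^2(P_Y\|Q_Y)}{\chi^2(P_X\|Q_X)}.$$ Consequently, if $Q_X$ is finitely supported on $\mathcal X$ (and not a point mass), $$\mu_f(Q_X,W_{Y|X})\le\frac{1}{f(0)+f'(1)}\,\kappa\Big(0,\frac1{\min_xQ_X(x)}\Big)\,\mu_{\chi^2}(Q_X,W_{Y|X}).$$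
   Context: $D_f(P\|Q):=\sum_xQ(x)f(P(x)/Q(x))$ is the $f$-divergence; $\chi^2(P\|Q)=\sum_x(P(x)-Q(x))^2/Q(x)$. The contraction coefficient is $\mu_f(Q_X,W_{Y|X}):=\sup\{D_f(P_Y\|Q_Y)/D_f(P_X\|Q_X): D_f(P_X\|Q_X)\in(0,\infty)\}$ with $P_Y=P_XW_{Y|X}$, $Q_Y=Q_XW_{Y|X}$; $\mu_{\chi^2}$ is the same with $f(t)=(t-1)^2$. *)

From Stdlib Require Import Reals List.
Import ListNotations.
Open Scope R_scope.

Definition sum_list {T : Type} (a : T -> R) (L : list T) : R :=
  fold_right (fun x acc => a x + acc) 0 L.

(* [is_sum a s]: the family (a x)_{x : T} is (unconditionally) summable with
   sum s, i.e. the net of finite partial sums (over finite subsets, ordered by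
   inclusion) converges to s.  For finite T this is the ordinary finite sum;
   for countable T it is the usual (absolutely convergent) series. *)
Definition is_sum {T : Type} (a : T -> R) (s : R) : Prop :=
  forall eps, 0 < eps ->
    exists L : list T, NoDup L /\
      forall L' : list T, NoDup L' -> incl L L' ->
        Rabs (sum_list a L' - s) < eps.

Definition countable (T : Type) : Prop :=
  exists e : T -> nat, forall x y, e x = e y -> x = y.

Definition finite_type (T : Type) : Prop :=
  exists l : list T, NoDup l /\ forall x, In x l.

Definition pmf {T : Type} (P : T -> R) : Prop :=
  (forall x, 0 <= P x) /\ is_sum P 1.

(* stochastic transformation W_{Y|X}; W x y = W(y|x) *)
Definition channel {X Y : Type} (W : X -> Y -> R) : Prop :=
  (forall x y, 0 <= W x y) /\ (forall x, is_sum (W x) 1).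

Definition output {X Y : Type} (P : X -> R) (W : X -> Y -> R) (PY : Y -> R) : Prop :=
  forall y, is_sum (fun x => P x * W x y) (PY y).

Definition convex_pos (f : R -> R) : Prop :=
  forall x y l, 0 < x -> 0 < y -> 0 <= l <= 1 ->
    f (l * x + (1 - l) * y) <= l * f x + (1 - l) * f y.

Definition right_lim0 (f : R -> R) (f0 : R) : Prop :=
  forall eps, 0 < eps -> exists delta, 0 < delta /\
    forall t, 0 < t < delta -> Rabs (f t - f0) < eps.

(* f extended to [0,oo) by continuity at 0: f(0) := f0 *)
Definition fext (f : R -> R) (f0 : R) (t : R) : R :=
  if Rle_dec t 0 then f0 else f t.

Definition fdiv {T : Type} (f : R -> R) (f0 : R) (P Q : T -> R) (D : R) : Prop :=
  is_sum (fun x => Q x * fext f f0 (P x / Q x)) D.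

Definition chi2 {T : Type} (P Q : T -> R) (C : R) : Prop :=
  is_sum (fun x => (P x - Q x) ^ 2 / Q x) C.

Definition is_kappa (f : R -> R) (f1' : R) (Dom : R -> Prop) (k : R) : Prop :=
  is_lub (fun r => exists t, Dom t /\ r = (f t + f1' * (1 - t)) / (t - 1) ^ 2) k.

Definition mu_f_set {X Y : Type} (f : R -> R) (f0 : R) (Q : X -> R)
  (W : X -> Y -> R) (r : R) : Prop :=
  exists (P : X -> R) (PY QY : Y -> R) (DX DY : R),
    pmf P /\ output P W PY /\ output Q W QY /\
    fdiv f f0 P Q DX /\ 0 < DX /\ fdiv f f0 PY QY DY /\ r = DY / DX.

Definition is_mu_f {X Y : Type} (f : R -> R) (f0 : R) (Q : X -> R)
  (W : X -> Y -> R) (mu : R) : Prop := is_lub (mu_f_set f f0 Q W) mu.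

Definition mu_chi2_set {X Y : Type} (Q : X -> R) (W : X -> Y -> R) (r : R) : Prop :=
  exists (P : X -> R) (PY QY : Y -> R) (CX CY : R),
    pmf P /\ output P W PY /\ output Q W QY /\
    chi2 P Q CX /\ 0 < CX /\ chi2 PY QY CY /\ r = CY / CX.

Definition is_mu_chi2 {X Y : Type} (Q : X -> R) (W : X -> Y -> R) (mu : R) : Prop :=
  is_lub (mu_chi2_set Q W) mu.

From Stdlib Require Import Reals List Lra Psatz ClassicalEpsilon Classical.
Import ListNotations.
Open Scope R_scope.

(* Put phi(t) = f(t) + f'(1) (1 - t) ([tangent_gap]).  As P and Q have the same mass,
   D_f(P||Q) = sum Q phi(P/Q), while chi^2(P||Q) = sum Q (P/Q - 1)^2, so both inequalities
   reduce to pointwise bounds on phi at the likelihood ratios.  The tangent at 1 of the convex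
   g(t) = (f(t) - f(0))/t, multiplied by t, gives phi(t) >= (f(0) + f'(1)) (t - 1)^2, hence
   D_f(P_X||Q_X) >= (f(0) + f'(1)) chi^2(P_X||Q_X).  Each output ratio P_Y(y)/Q_Y(y) is an
   average of the input ratios weighted by Q_X(x) W(y|x), so it lies in [xi1, xi2]; there
   phi(t) <= kappa (t - 1)^2, by definition of kappa inside the interval and by convexity of phi
   at its endpoints.  Hence D_f(P_Y||Q_Y) <= kappa chi^2(P_Y||Q_Y).  For the contraction
   coefficients every input P_X has its ratios in [0, 1/min Q_X]. *)

Section FiniteSums.
Context {T : Type}.
Implicit Types (a b : T -> R) (L : list T).

Lemma sum_list_app a L1 L2 : sum_list a (L1 ++ L2) = sum_list a L1 + sum_list a L2.
Proof. induction L1 as [|x L1 IH]; simpl; [ring | rewrite IH; ring]. Qed.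

Lemma sum_list_plus a b L :
  sum_list (fun x => a x + b x) L = sum_list a L + sum_list b L.
Proof. induction L as [|x L IH]; simpl; [ring | rewrite IH; ring]. Qed.

Lemma sum_list_scal k a L : sum_list (fun x => k * a x) L = k * sum_list a L.
Proof. induction L as [|x L IH]; simpl; [ring | rewrite IH; ring]. Qed.

Lemma sum_list_zero L : sum_list (fun _ => 0) L = 0.
Proof. induction L as [|x L IH]; simpl; [ring | rewrite IH; ring]. Qed.

Lemma sum_list_ext a b L : (forall x, a x = b x) -> sum_list a L = sum_list b L.
Proof. intros Hab; induction L as [|x L IH]; simpl; [ring | rewrite Hab, IH; ring]. Qed.

Lemma sum_list_le_in a b L :
  (forall x, In x L -> a x <= b x) -> sum_list a L <= sum_list b L.
Proof.
  induction L as [|x L IH]; simpl; intros Hab; [lra |].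
  pose proof (Hab x (or_introl eq_refl)).
  assert (sum_list a L <= sum_list b L) by (apply IH; auto).
  lra.
Qed.

Lemma sum_list_nonneg a L : (forall x, 0 <= a x) -> 0 <= sum_list a L.
Proof. intros Ha; induction L as [|x L IH]; simpl; [lra | pose proof (Ha x); lra]. Qed.

Lemma sum_list_incl_le a L L' :
  (forall x, 0 <= a x) -> NoDup L -> incl L L' -> sum_list a L <= sum_list a L'.
Proof.
  intros Ha HL; revert L'.
  induction HL as [|x L Hx HL IH]; intros L' Hincl; simpl.
  - now apply sum_list_nonneg.
  - destruct (in_split x L') as [L1 [L2 ->]]; [apply Hincl; left; auto |].
    assert (HL12 : sum_list a L <= sum_list a (L1 ++ L2)).
    { apply IH; intros z Hz.
      destruct (in_app_or L1 (x :: L2) z) as [H | [<- | H]];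
        [apply Hincl; right; auto | now apply in_or_app; left | contradiction
        | now apply in_or_app; right]. }
    rewrite sum_list_app in *; simpl; pose proof (Ha x); lra.
Qed.

Lemma NoDup_incl_app L1 L2 : exists L, NoDup L /\ incl L1 L /\ incl L2 L.
Proof.
  exists (nodup (fun x y => excluded_middle_informative (x = y)) (L1 ++ L2)).
  split; [apply NoDup_nodup |].
  split; intros z Hz; apply nodup_In, in_or_app; auto.
Qed.

Lemma is_sum_nonneg_iff a s : (forall x, 0 <= a x) ->
  is_sum a s <->
  (forall L, NoDup L -> sum_list a L <= s) /\
  (forall eps, 0 < eps -> exists L, NoDup L /\ s - eps < sum_list a L).
Proof.
  intros Ha; split.
  - intros Hs; split.
    + intros L HL; apply Rnot_lt_le; intros Hlt.
      destruct (Hs (sum_list a L - s)) as [L0 [_ H0]]; [lra |].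
      destruct (NoDup_incl_app L L0) as [L' [HL' [H1 H2]]].
      specialize (H0 L' HL' H2); apply Rabs_def2 in H0.
      pose proof (sum_list_incl_le a L L' Ha HL H1); lra.
    + intros eps Heps; destruct (Hs eps Heps) as [L0 [HL0 H0]].
      exists L0; split; auto.
      specialize (H0 L0 HL0 (incl_refl _)); apply Rabs_def2 in H0; lra.
  - intros [Hub Hlb] eps Heps; destruct (Hlb eps Heps) as [L0 [HL0 H0]].
    exists L0; split; auto; intros L' HL' Hincl.
    pose proof (sum_list_incl_le a L0 L' Ha HL0 Hincl); pose proof (Hub L' HL').
    apply Rabs_def1; lra.
Qed.

Lemma is_sum_partial_le a s L :
  (forall x, 0 <= a x) -> is_sum a s -> NoDup L -> sum_list a L <= s.
Proof. intros Ha Hs; now apply (is_sum_nonneg_iff a s Ha). Qed.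

Lemma is_sum_partial_gt a s eps : (forall x, 0 <= a x) -> is_sum a s -> 0 < eps ->
  exists L, NoDup L /\ s - eps < sum_list a L.
Proof. intros Ha Hs; now apply (is_sum_nonneg_iff a s Ha). Qed.

Lemma is_sum_ge0 a s : (forall x, 0 <= a x) -> is_sum a s -> 0 <= s.
Proof. intros Ha Hs; apply (is_sum_partial_le a s []); auto; constructor. Qed.

Lemma is_sum_term_le a s x : (forall x, 0 <= a x) -> is_sum a s -> a x <= s.
Proof.
  intros Ha Hs.
  assert (HL : NoDup [x]) by (constructor; [intros [] | constructor]).
  pose proof (is_sum_partial_le a s [x] Ha Hs HL); simpl in *; lra.
Qed.

Lemma is_sum_term_pos a s x : (forall x, 0 <= a x) -> 0 < a x -> is_sum a s -> 0 < s.
Proof. intros Ha Hx Hs; pose proof (is_sum_term_le a s x Ha Hs); lra. Qed.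

Lemma is_sum_0 : is_sum (fun _ : T => 0) 0.
Proof.
  intros eps Heps; exists []; split; [constructor |].
  intros L _ _; rewrite sum_list_zero, Rminus_0_r, Rabs_R0; exact Heps.
Qed.

Lemma is_sum_plus a b s t : is_sum a s -> is_sum b t -> is_sum (fun x => a x + b x) (s + t).
Proof.
  intros Ha Hb eps Heps.
  destruct (Ha (eps / 2)) as [La [_ Ha']]; [lra |].
  destruct (Hb (eps / 2)) as [Lb [_ Hb']]; [lra |].
  destruct (NoDup_incl_app La Lb) as [L [HL [H1 H2]]].
  exists L; split; auto; intros L' HL' Hincl.
  specialize (Ha' L' HL' (incl_tran H1 Hincl)); specialize (Hb' L' HL' (incl_tran H2 Hincl)).
  rewrite sum_list_plus; apply Rabs_def2 in Ha'; apply Rabs_def2 in Hb'; apply Rabs_def1; lra.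
Qed.

Lemma is_sum_scal k a s : is_sum a s -> is_sum (fun x => k * a x) (k * s).
Proof.
  intros Ha eps Heps.
  pose proof (Rabs_pos k).
  destruct (Ha (eps / (Rabs k + 1))) as [L [HL Hs]]; [apply Rdiv_lt_0_compat; lra |].
  exists L; split; auto; intros L' HL' Hincl; specialize (Hs L' HL' Hincl).
  rewrite sum_list_scal, <- Rmult_minus_distr_l, Rabs_mult.
  apply (Rmult_lt_compat_l (Rabs k + 1)) in Hs; [| lra].
  replace ((Rabs k + 1) * (eps / (Rabs k + 1))) with eps in Hs by (field; lra).
  pose proof (Rabs_pos (sum_list a L' - s)); nra.
Qed.

Lemma is_sum_ext a b s : (forall x, a x = b x) -> is_sum a s -> is_sum b s.
Proof.
  intros Hab Ha eps Heps; destruct (Ha eps Heps) as [L [HL Hs]].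
  exists L; split; auto; intros L' HL' Hincl.
  rewrite <- (sum_list_ext a b L' Hab); auto.
Qed.

Lemma is_sum_minus a b s t : is_sum a s -> is_sum b t -> is_sum (fun x => a x - b x) (s - t).
Proof.
  intros Ha Hb.
  apply (is_sum_ext (fun x => a x + -1 * b x)); [intros x; ring |].
  replace (s - t) with (s + -1 * t) by ring.
  now apply is_sum_plus, is_sum_scal.
Qed.

Lemma is_sum_le a b s t : (forall x, a x <= b x) -> is_sum a s -> is_sum b t -> s <= t.
Proof.
  intros Hab Ha Hb; apply Rnot_lt_le; intros Hlt.
  destruct (Ha ((s - t) / 2)) as [La [_ Ha']]; [lra |].
  destruct (Hb ((s - t) / 2)) as [Lb [_ Hb']]; [lra |].
  destruct (NoDup_incl_app La Lb) as [L [HL [H1 H2]]].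
  specialize (Ha' L HL H1); specialize (Hb' L HL H2).
  pose proof (sum_list_le_in a b L (fun x _ => Hab x)).
  apply Rabs_def2 in Ha'; apply Rabs_def2 in Hb'; lra.
Qed.

Lemma is_sum_weighted_0_exists_le0 a w x0 : (forall x, 0 <= w x) -> 0 < w x0 ->
  is_sum (fun x => a x * w x) 0 -> exists x, a x <= 0.
Proof.
  intros Hw Hx0 Ha; apply NNPP; intros Hn.
  assert (Hpos : forall x, 0 < a x) by (intros x; apply Rnot_le_lt; intros Hx; apply Hn; eauto).
  enough (0 < 0) by lra.
  apply (is_sum_term_pos _ _ x0 (fun x => Rmult_le_pos _ _ (Rlt_le _ _ (Hpos x)) (Hw x))); auto.
  pose proof (Hpos x0); nra.
Qed.

Lemma is_sum_finite a l : (forall x, 0 <= a x) -> NoDup l -> (forall x, In x l) ->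
  is_sum a (sum_list a l).
Proof.
  intros Ha Hl Hall; apply is_sum_nonneg_iff; auto; split.
  - intros L HL; apply sum_list_incl_le; auto; intros z _; auto.
  - intros eps Heps; exists l; split; auto; lra.
Qed.

Lemma is_sum_exists_dominated a b M s : 0 <= M -> (forall x, 0 <= b x) ->
  (forall x, 0 <= a x <= M * b x) -> is_sum b s -> exists s', is_sum a s'.
Proof.
  intros HM Hb0 Hab Hb.
  set (E := fun r => exists L, NoDup L /\ r = sum_list a L).
  destruct (completeness E) as [s' [Hub Hlub]].
  - exists (M * s); intros r [L [HL ->]].
    apply Rle_trans with (M * sum_list b L).
    + rewrite <- sum_list_scal; apply sum_list_le_in; intros x _; apply Hab.
    + apply Rmult_le_compat_l; auto; now apply (is_sum_partial_le b).
  - exists 0, []; split; [constructor | reflexivity].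
  - exists s'; apply is_sum_nonneg_iff; [intros x; apply Hab | split].
    + intros L HL; apply Hub; exists L; auto.
    + intros eps Heps; apply NNPP; intros Hn.
      enough (s' <= s' - eps) by lra.
      apply Hlub; intros r [L [HL ->]]; apply Rnot_lt_le; intros Hlt.
      apply Hn; exists L; auto.
Qed.

End FiniteSums.

Section Channels.
Context {X Y : Type}.

Lemma sum_list_comm (F : X -> Y -> R) (Lx : list X) (Ly : list Y) :
  sum_list (fun y => sum_list (fun x => F x y) Lx) Ly =
  sum_list (fun x => sum_list (fun y => F x y) Ly) Lx.
Proof.
  induction Lx as [|x Lx IH]; simpl; [apply sum_list_zero |].
  rewrite <- IH; apply (sum_list_plus (fun y => F x y)).
Qed.

Lemma is_sum_sum_list (F : X -> Y -> R) (S : Y -> R) (Ly : list Y) :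
  (forall y, is_sum (fun x => F x y) (S y)) ->
  is_sum (fun x => sum_list (fun y => F x y) Ly) (sum_list S Ly).
Proof.
  intros HS; induction Ly as [|y Ly IH]; simpl.
  - apply is_sum_0.
  - now apply (is_sum_plus (fun x => F x y)).
Qed.

Lemma channel_partial_gt (W : X -> Y -> R) (Lx : list X) eps : channel W -> 0 < eps ->
  exists Ly, NoDup Ly /\ forall x, In x Lx -> 1 - eps < sum_list (W x) Ly.
Proof.
  intros [HW0 HW1] Heps; induction Lx as [|x Lx [L1 [HL1 H1]]].
  - exists []; split; [constructor | intros x []].
  - destruct (is_sum_partial_gt (W x) 1 eps (HW0 x) (HW1 x) Heps) as [L2 [HL2 H2]].
    destruct (NoDup_incl_app L1 L2) as [L [HL [I1 I2]]].
    exists L; split; auto; intros z [<- | Hz].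
    + pose proof (sum_list_incl_le (W x) L2 L (HW0 x) HL2 I2); lra.
    + pose proof (H1 z Hz); pose proof (sum_list_incl_le (W z) L1 L (HW0 z) HL1 I1); lra.
Qed.

Lemma output_is_sum (P : X -> R) (W : X -> Y -> R) (PY : Y -> R) A :
  (forall x, 0 <= P x) -> is_sum P A -> channel W -> output P W PY -> is_sum PY A.
Proof.
  intros HP HA HW HPY; pose proof HW as [HW0 HW1].
  assert (HPW : forall y x, 0 <= P x * W x y) by (intros; apply Rmult_le_pos; auto).
  assert (HA0 : 0 <= A) by now apply (is_sum_ge0 P).
  apply is_sum_nonneg_iff; [intros y; exact (is_sum_ge0 _ _ (HPW y) (HPY y)) | split].
  - intros Ly HLy.
    refine (is_sum_le _ P _ _ _ (is_sum_sum_list (fun x y => P x * W x y) PY Ly HPY) HA).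
    intros x; rewrite sum_list_scal.
    pose proof (is_sum_partial_le (W x) 1 Ly (HW0 x) (HW1 x) HLy); pose proof (HP x); nra.
  - intros eps Heps.
    destruct (Rle_lt_dec eps A) as [Hle | Hlt];
      [| exists []; split; [constructor | simpl; lra]].
    set (eta := eps / (2 * (A + 1))).
    assert (Heta : 0 < eta) by (apply Rdiv_lt_0_compat; lra).
    assert (Heta2 : eta * (2 * (A + 1)) = eps) by (unfold eta; field; lra).
    destruct (is_sum_partial_gt P A eta HP HA Heta) as [Lx [HLx HLxP]].
    destruct (channel_partial_gt W Lx eta HW Heta) as [Ly [HLy HLyW]].
    exists Ly; split; auto.
    assert (Hpart : sum_list (fun x => sum_list (fun y => P x * W x y) Ly) Lx <= sum_list PY Ly).
    { rewrite <- sum_list_comm; apply sum_list_le_in; intros y _.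
      apply (is_sum_partial_le (fun x => P x * W x y)); auto. }
    assert (Hmass : (1 - eta) * sum_list P Lx <=
                 sum_list (fun x => sum_list (fun y => P x * W x y) Ly) Lx).
    { rewrite <- sum_list_scal; apply sum_list_le_in; intros x Hx.
      rewrite sum_list_scal; pose proof (HLyW x Hx); pose proof (HP x); nra. }
    nra.
Qed.

Lemma output_pos (Q : X -> R) (W : X -> Y -> R) (QY : Y -> R) y :
  (forall x, 0 < Q x) -> channel W -> (exists x, 0 < W x y) -> output Q W QY -> 0 < QY y.
Proof.
  intros HQ [HW0 _] [x Hx] HQY.
  apply (is_sum_term_pos (fun x => Q x * W x y) _ x); auto.
  - intros z; pose proof (HQ z); pose proof (HW0 z y); nra.
  - pose proof (HQ x); nra.
Qed.

Lemma output_le_scal (P Q : X -> R) (W : X -> Y -> R) (PY QY : Y -> R) m y :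
  (forall x, P x <= m * Q x) -> channel W -> output P W PY -> output Q W QY ->
  PY y <= m * QY y.
Proof.
  intros HPQ [HW0 _] HPY HQY.
  refine (is_sum_le _ (fun x => m * (Q x * W x y)) _ _ _ (HPY y) (is_sum_scal _ _ _ (HQY y))).
  intros x; pose proof (HPQ x); pose proof (HW0 x y); nra.
Qed.

Lemma output_ratio_between (P Q : X -> R) (W : X -> Y -> R) (PY QY : Y -> R) y :
  (forall x, 0 < Q x) -> channel W -> (exists x, 0 < W x y) ->
  output P W PY -> output Q W QY ->
  (exists x, P x / Q x <= PY y / QY y) /\ (exists x, PY y / QY y <= P x / Q x).
Proof.
  intros HQ HW HWy HPY HQY.
  pose proof (output_pos Q W QY y HQ HW HWy HQY) as HQYy.
  set (r := PY y / QY y).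
  assert (HrQ : is_sum (fun x => r * Q x * W x y) (PY y)).
  { replace (PY y) with (r * QY y) by (unfold r; field; lra).
    apply (is_sum_ext (fun x => r * (Q x * W x y))); [intros; ring | apply is_sum_scal, HQY]. }
  destruct HWy as [x0 Hx0].
  pose proof (fun a => is_sum_weighted_0_exists_le0 a (fun x => W x y) x0 (fun x => proj1 HW x y) Hx0)
    as Hgap.
  split.
  - destruct (Hgap (fun x => P x - r * Q x)) as [x Hx].
    + replace 0 with (PY y - PY y) by ring.
      apply (is_sum_ext (fun x => P x * W x y - r * Q x * W x y)); [intros; ring |].
      now apply is_sum_minus.
    + exists x; pose proof (HQ x); apply (Rmult_le_reg_r (Q x)); [lra |].
      replace (P x / Q x * Q x) with (P x) by (field; lra); lra.
  - destruct (Hgap (fun x => r * Q x - P x)) as [x Hx].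
    + replace 0 with (PY y - PY y) by ring.
      apply (is_sum_ext (fun x => r * Q x * W x y - P x * W x y)); [intros; ring |].
      now apply is_sum_minus.
    + exists x; pose proof (HQ x); apply (Rmult_le_reg_r (Q x)); [lra |].
      replace (P x / Q x * Q x) with (P x) by (field; lra); lra.
Qed.

End Channels.

Definition tangent_gap (h : R -> R) (d t : R) : R := h t + d * (1 - t).

Lemma convex_pos_tangent_gap h d : convex_pos h -> convex_pos (tangent_gap h d).
Proof.
  intros Hh x y l Hx Hy Hl; unfold tangent_gap.
  pose proof (Hh x y l Hx Hy Hl); nra.
Qed.

Lemma convex_pos_tangent (g : R -> R) d : convex_pos g -> derivable_pt_lim g 1 d ->
  forall t, 0 < t -> g 1 + d * (t - 1) <= g t.
Proof.
  intros Hg Hd t Ht.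
  destruct (Req_dec t 1) as [-> | Ht1]; [lra |].
  assert (Hat : 0 < Rabs (t - 1)) by (apply Rabs_pos_lt; lra).
  apply Rle_plus_epsilon; intros eps Heps.
  destruct (Hd (eps / Rabs (t - 1))) as [[del Hdel] Hslope]; [now apply Rdiv_lt_0_compat |].
  set (l := Rmin 1 (del / (2 * Rabs (t - 1)))).
  assert (Hl0 : 0 < l) by (apply Rmin_glb_lt; [lra | apply Rdiv_lt_0_compat; lra]).
  assert (Hl1 : l <= 1) by apply Rmin_l.
  assert (Hl2 : l * Rabs (t - 1) <= del / 2).
  { replace (del / 2) with (del / (2 * Rabs (t - 1)) * Rabs (t - 1)) by (field; lra).
    apply Rmult_le_compat_r; [lra | apply Rmin_r]. }
  set (h := l * (t - 1)).
  assert (Hh : h <> 0) by (apply Rmult_integral_contrapositive; split; lra).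
  assert (Hhdel : Rabs h < del) by (unfold h; rewrite Rabs_mult, Rabs_right by lra; lra).
  specialize (Hslope h Hh Hhdel).
  set (q := (g (1 + h) - g 1) / h) in Hslope.
  assert (Hq : q * (t - 1) <= g t - g 1).
  { pose proof (Hg t 1 l Ht ltac:(lra) ltac:(lra)) as Hc.
    replace (l * t + (1 - l) * 1) with (1 + h) in Hc by (unfold h; ring).
    apply (Rmult_le_reg_l l); [lra |].
    replace (l * (q * (t - 1))) with (g (1 + h) - g 1) by (unfold q, h; field; lra); lra. }
  assert (Herr : Rabs ((q - d) * (t - 1)) < eps).
  { rewrite Rabs_mult.
    apply (Rmult_lt_compat_r (Rabs (t - 1))) in Hslope; [| lra].
    replace (eps / Rabs (t - 1) * Rabs (t - 1)) with eps in Hslope by (field; lra); lra. }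
  apply Rabs_def2 in Herr; lra.
Qed.

Lemma derivable_pt_lim_slope_from0 (f : R -> R) f0 f1' :
  derivable_pt_lim f 1 f1' -> f 1 = 0 ->
  derivable_pt_lim (fun t => (f t - f0) / t) 1 (f1' + f0).
Proof.
  intros Hd Hf1.
  assert (Hnum : derivable_pt_lim (fun t => f t - f0) 1 f1').
  { replace f1' with (f1' - 0) by ring.
    apply (derivable_pt_lim_minus f (fun _ => f0)); auto; apply derivable_pt_lim_const. }
  pose proof (derivable_pt_lim_div _ id 1 _ 1 Hnum (derivable_pt_lim_id 1)
                ltac:(unfold id; lra)) as Hq.
  unfold div_fct, id in Hq; rewrite Hf1 in Hq.
  replace (f1' + f0) with ((f1' * 1 - 1 * (0 - f0)) / 1²) by (unfold Rsqr; field); exact Hq.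
Qed.

Lemma le_0_of_le_mul_small A B l0 : 0 < l0 -> (forall l, 0 < l < l0 -> A <= l * B) -> A <= 0.
Proof.
  intros Hl0 H.
  destruct (Rle_lt_dec B 0) as [HB | HB]; [pose proof (H (l0 / 2) ltac:(lra)); nra |].
  apply Rnot_lt_le; intros HA.
  set (l := Rmin (l0 / 2) (A / (2 * B))).
  assert (0 < l) by (apply Rmin_glb_lt; [lra | apply Rdiv_lt_0_compat; lra]).
  assert (l <= l0 / 2) by apply Rmin_l.
  assert (Hl : l * B <= A / 2).
  { replace (A / 2) with (A / (2 * B) * B) by (field; lra).
    apply Rmult_le_compat_r; [lra | apply Rmin_r]. }
  pose proof (H l ltac:(lra)); lra.
Qed.

(* Write r = l u + (1 - l) t with u beyond r and t between r and 1: the bound at t passes to r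
   as l -> 0. *)
Lemma convex_pos_le_endpoint (p : R -> R) k r : convex_pos p -> 0 <= k -> 0 < r -> r <> 1 ->
  (forall t, r < t < 1 \/ 1 < t < r -> p t <= k * (t - 1) ^ 2) -> p r <= k * (r - 1) ^ 2.
Proof.
  intros Hp Hk Hr Hr1 Hbound.
  assert (Hu : exists u, 0 < u /\ (u < r < 1 \/ 1 < r < u)).
  { destruct (Rlt_le_dec r 1); [exists (r / 2) | exists (r + 1)]; lra. }
  destruct Hu as [u [Hu Hur]].
  set (l0 := (1 - r) / (1 - u)).
  assert (Hl0 : l0 * (1 - u) = 1 - r) by (unfold l0; field; lra).
  assert (Hl0pos : 0 < l0 < 1)
    by (clearbody l0; destruct Hur; split; nra).
  enough (p r - k * (r - 1) ^ 2 <= 0) by lra.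
  apply (le_0_of_le_mul_small _ (p u - k * (r - 1) ^ 2) l0); [lra |].
  intros l Hl.
  set (t := (r - l * u) / (1 - l)).
  assert (Ht : (1 - l) * t = r - l * u) by (unfold t; field; lra).
  assert (Htr : (1 - l) * (t - r) = l * (r - u))
    by (rewrite Rmult_minus_distr_l, Ht; ring).
  assert (Ht1 : (1 - l) * (1 - t) = (l0 - l) * (1 - u))
    by (replace ((l0 - l) * (1 - u)) with (l0 * (1 - u) - l * (1 - u)) by ring;
        rewrite Hl0, Rmult_minus_distr_l, Ht; ring).
  assert (Hrt : r < t < 1 \/ 1 < t < r) by (clearbody t; destruct Hur; [left | right]; split; nra).
  pose proof (Hp u t l Hu ltac:(destruct Hrt; lra) ltac:(lra)) as Hc.
  replace (l * u + (1 - l) * t) with r in Hc by (rewrite Ht; ring).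
  assert ((t - 1) ^ 2 <= (r - 1) ^ 2) by (destruct Hrt; nra).
  assert ((1 - l) * p t <= (1 - l) * (k * (r - 1) ^ 2)).
  { apply Rmult_le_compat_l; [lra |].
    apply Rle_trans with (k * (t - 1) ^ 2); [now apply Hbound | now apply Rmult_le_compat_l]. }
  lra.
Qed.

Lemma pow2_sub_pos a b : a <> b -> 0 < (a - b) ^ 2.
Proof. intros Hab; rewrite <- Rsqr_pow2; apply Rsqr_pos_lt; lra. Qed.

Lemma is_kappa_tangent_gap_le f f1' Dom k t : is_kappa f f1' Dom k -> Dom t -> t <> 1 ->
  tangent_gap f f1' t <= k * (t - 1) ^ 2.
Proof.
  intros [Hub _] HDt Ht1; pose proof (pow2_sub_pos t 1 Ht1).
  specialize (Hub _ (ex_intro _ t (conj HDt eq_refl))).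
  apply (Rmult_le_compat_r ((t - 1) ^ 2)) in Hub; [| lra].
  unfold tangent_gap; replace ((f t + f1' * (1 - t)) / (t - 1) ^ 2 * (t - 1) ^ 2)
    with (f t + f1' * (1 - t)) in Hub by (field; lra); exact Hub.
Qed.

Lemma is_kappa_ge f f1' Dom k c t : is_kappa f f1' Dom k -> Dom t -> t <> 1 ->
  c * (t - 1) ^ 2 <= tangent_gap f f1' t -> c <= k.
Proof.
  intros Hk HDt Ht1 Hc; pose proof (pow2_sub_pos t 1 Ht1).
  pose proof (is_kappa_tangent_gap_le f f1' Dom k t Hk HDt Ht1).
  apply (Rmult_le_reg_r ((t - 1) ^ 2)); lra.
Qed.

Lemma is_kappa_le_endpoint f f1' Dom k r : convex_pos f -> f 1 = 0 -> 0 <= k ->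
  is_kappa f f1' Dom k -> 0 < r -> (forall t, r < t < 1 \/ 1 < t < r -> Dom t) ->
  tangent_gap f f1' r <= k * (r - 1) ^ 2.
Proof.
  intros Hf Hf1 Hk0 Hk Hr HDom.
  destruct (Req_dec r 1) as [-> | Hr1]; [unfold tangent_gap; rewrite Hf1; nra |].
  apply convex_pos_le_endpoint; auto; [now apply convex_pos_tangent_gap |].
  intros t Ht; apply (is_kappa_tangent_gap_le _ _ Dom); [auto | auto | lra].
Qed.

Lemma tangent_gap_fext f f0 d t : 0 < t -> tangent_gap (fext f f0) d t = tangent_gap f d t.
Proof. intros Ht; unfold tangent_gap, fext; destruct (Rle_dec t 0); [lra | reflexivity]. Qed.

Lemma tangent_gap_fext0 f f0 d : tangent_gap (fext f f0) d 0 = f0 + d.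
Proof. unfold tangent_gap, fext; destruct (Rle_dec 0 0); [ring | lra]. Qed.

Section Divergences.
Context {T : Type}.
Variables (P Q : T -> R).
Hypotheses (HP : is_sum P 1) (HQ : is_sum Q 1) (HQpos : forall x, 0 < Q x).

Lemma is_sum_tangent_gap h d D : is_sum (fun x => Q x * h (P x / Q x)) D ->
  is_sum (fun x => Q x * tangent_gap h d (P x / Q x)) D.
Proof.
  intros HD; replace D with (D + d * (1 - 1)) by ring.
  apply (is_sum_ext (fun x => Q x * h (P x / Q x) + d * (Q x - P x))).
  - intros x; unfold tangent_gap; field; pose proof (HQpos x); lra.
  - now apply is_sum_plus, is_sum_scal, is_sum_minus.
Qed.

Lemma chi2_is_sum_ratio C : chi2 P Q C -> is_sum (fun x => Q x * (P x / Q x - 1) ^ 2) C.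
Proof. apply is_sum_ext; intros x; field; pose proof (HQpos x); lra. Qed.

Lemma chi2_term_ge0 x : 0 <= (P x - Q x) ^ 2 / Q x.
Proof. apply Rmult_le_pos; [apply pow2_ge_0 | apply Rlt_le, Rinv_0_lt_compat, HQpos]. Qed.

Lemma chi2_ge0 C : chi2 P Q C -> 0 <= C.
Proof. apply is_sum_ge0, chi2_term_ge0. Qed.

Lemma chi2_pos C : (exists x, P x <> Q x) -> chi2 P Q C -> 0 < C.
Proof.
  intros [x Hx] HC; apply (is_sum_term_pos _ _ x chi2_term_ge0); auto.
  apply Rdiv_lt_0_compat; [now apply pow2_sub_pos | apply HQpos].
Qed.

Lemma fdiv_le_chi2 h d k D C : is_sum (fun x => Q x * h (P x / Q x)) D -> chi2 P Q C ->
  (forall x, tangent_gap h d (P x / Q x) <= k * (P x / Q x - 1) ^ 2) -> D <= k * C.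
Proof.
  intros HD HC Hk.
  refine (is_sum_le _ _ _ _ _ (is_sum_tangent_gap h d D HD)
            (is_sum_scal k _ _ (chi2_is_sum_ratio C HC))).
  intros x; pose proof (Hk x); pose proof (HQpos x); nra.
Qed.

Lemma chi2_le_fdiv h d c D C : is_sum (fun x => Q x * h (P x / Q x)) D -> chi2 P Q C ->
  (forall x, c * (P x / Q x - 1) ^ 2 <= tangent_gap h d (P x / Q x)) -> c * C <= D.
Proof.
  intros HD HC Hc.
  refine (is_sum_le _ _ _ _ _ (is_sum_scal c _ _ (chi2_is_sum_ratio C HC))
            (is_sum_tangent_gap h d D HD)).
  intros x; pose proof (Hc x); pose proof (HQpos x); nra.
Qed.

Lemma chi2_exists_of_ratio_bounded m : (forall x, 0 <= P x / Q x <= m) -> exists C, chi2 P Q C.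
Proof.
  intros Hm.
  apply (is_sum_exists_dominated _ Q ((m + 1) ^ 2) 1 (pow2_ge_0 _)
           (fun x => Rlt_le _ _ (HQpos x))); [| exact HQ].
  intros x; split; [apply chi2_term_ge0 |].
  pose proof (Hm x); pose proof (HQpos x).
  replace ((P x - Q x) ^ 2 / Q x) with (Q x * (P x / Q x - 1) ^ 2) by (field; lra).
  assert ((P x / Q x - 1) ^ 2 <= (m + 1) ^ 2) by nra; nra.
Qed.

End Divergences.

Lemma ratio_le_of_bounds DY DX CY CX k c : 0 < c -> 0 < CX -> 0 <= k -> 0 <= CY ->
  c * CX <= DX -> DY <= k * CY -> DY / DX <= k / c * (CY / CX).
Proof.
  intros Hc HCX Hk HCY HX HY.
  assert (HDX : 0 < DX) by nra.
  apply (Rmult_le_reg_r DX); [lra |].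
  replace (DY / DX * DX) with DY by (field; lra).
  replace (k / c * (CY / CX) * DX) with (k * CY * (DX / (c * CX))) by (field; lra).
  assert (1 <= DX / (c * CX)).
  { apply (Rmult_le_reg_r (c * CX)); [nra |].
    replace (DX / (c * CX) * (c * CX)) with DX by (field; lra); lra. }
  assert (0 <= k * CY) by (apply Rmult_le_pos; lra).
  nra.
Qed.

Lemma ratio_bounds_of_le_scal p q m : 0 <= p -> 0 < q -> p <= m * q -> 0 <= p / q <= m.
Proof.
  intros Hp Hq Hpq; split; [apply Rmult_le_pos; [lra | now apply Rlt_le, Rinv_0_lt_compat] |].
  apply (Rmult_le_reg_r q); [lra |]; replace (p / q * q) with p by (field; lra); lra.
Qed.

Section ContractionBounds.
Variables (f : R -> R) (f0 f1' : R).
Hypotheses (Hconv : convex_pos f) (Hder : derivable_pt_lim f 1 f1') (Hf1 : f 1 = 0)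
  (Hg : convex_pos (fun t => (f t - f0) / t)) (Hpos : 0 < f0 + f1').

Lemma tangent_gap_lower t : 0 <= t -> (f0 + f1') * (t - 1) ^ 2 <= tangent_gap (fext f f0) f1' t.
Proof.
  intros Ht; destruct (Req_dec t 0) as [-> | Ht0]; [rewrite tangent_gap_fext0; lra |].
  rewrite tangent_gap_fext by lra.
  pose proof (convex_pos_tangent _ _ Hg (derivable_pt_lim_slope_from0 f f0 f1' Hder Hf1) t
                ltac:(lra)) as Htan.
  cbv beta in Htan; rewrite Hf1 in Htan.
  apply (Rmult_le_compat_r t) in Htan; [| lra].
  replace ((f t - f0) / t * t) with (f t - f0) in Htan by (field; lra).
  unfold tangent_gap; nra.
Qed.

Lemma fdiv_ratio_le_chi2_ratio (X Y : Type) (P Q : X -> R) (W : X -> Y -> R)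
    (PY QY : Y -> R) (DX DY CX CY k : R) :
  pmf P -> pmf Q -> (forall x, 0 < P x) -> (forall x, 0 < Q x) -> (exists x, P x <> Q x) ->
  channel W -> (forall y, exists x, 0 < W x y) -> output P W PY -> output Q W QY ->
  fdiv f f0 P Q DX -> fdiv f f0 PY QY DY -> chi2 P Q CX -> chi2 PY QY CY ->
  is_kappa f f1' (fun t => (t < 1 /\ exists x, P x / Q x < t) \/
                           (1 < t /\ exists x, t < P x / Q x)) k ->
  DY / DX <= k / (f0 + f1') * (CY / CX).
Proof.
  intros [HP0 HP1] [HQ0 HQ1] HPpos HQpos [x0 Hx0] HW HWy HPY HQY HDX HDY HCX HCY Hk.
  pose proof (output_is_sum P W PY 1 HP0 HP1 HW HPY) as HPY1.
  pose proof (output_is_sum Q W QY 1 HQ0 HQ1 HW HQY) as HQY1.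
  assert (HQYpos : forall y, 0 < QY y) by (intros y; now apply (output_pos Q W)).
  assert (HPYpos : forall y, 0 < PY y) by (intros y; now apply (output_pos P W)).
  assert (Hratio : forall p q, 0 < p -> 0 < q -> 0 < p / q) by (intros; now apply Rdiv_lt_0_compat).
  assert (HX : (f0 + f1') * CX <= DX).
  { apply (chi2_le_fdiv P Q HP1 HQ1 HQpos (fext f f0) f1' _ DX CX HDX HCX).
    intros x; apply tangent_gap_lower, Rlt_le, Hratio; [apply HPpos | apply HQpos]. }
  set (t0 := P x0 / Q x0).
  assert (Ht0pos : 0 < t0) by now apply Hratio.
  assert (Ht0 : t0 <> 1).
  { intros Ht0; apply Hx0; pose proof (HQpos x0).
    replace (P x0) with (t0 * Q x0) by (unfold t0; field; lra); rewrite Ht0; ring. }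
  assert (Hkc : f0 + f1' <= k).
  { apply (is_kappa_ge f f1' _ k _ ((t0 + 1) / 2) Hk).
    - destruct (Rlt_le_dec t0 1); [left | right]; (split; [lra | exists x0; fold t0; lra]).
    - lra.
    - rewrite <- (tangent_gap_fext f f0) by lra; apply tangent_gap_lower; lra. }
  assert (HY : DY <= k * CY).
  { apply (fdiv_le_chi2 PY QY HPY1 HQY1 HQYpos (fext f f0) f1' k DY CY HDY HCY).
    intros y; pose proof (Hratio _ _ (HPYpos y) (HQYpos y)).
    rewrite tangent_gap_fext by lra.
    destruct (output_ratio_between P Q W PY QY y HQpos HW (HWy y) HPY HQY)
      as [[xl Hxl] [xu Hxu]].
    apply (is_kappa_le_endpoint f f1' _ k _ Hconv Hf1 ltac:(lra) Hk); [lra |].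
    intros t [Ht | Ht]; [left; split; [lra | exists xl; lra] | right; split; [lra | exists xu; lra]]. }
  apply ratio_le_of_bounds; [exact Hpos | | lra | exact (chi2_ge0 PY QY HQYpos CY HCY)
                            | exact HX | exact HY].
  apply (chi2_pos P Q HQpos CX); [exists x0 |]; assumption.
Qed.

Lemma tangent_gap_le_kappa_on_qmin_range qmin k r :
  0 < qmin < 1 -> f0 + f1' <= k ->
  is_kappa f f1' (fun t => (0 < t < 1) \/ (1 < t < 1 / qmin)) k ->
  0 <= r <= 1 / qmin -> tangent_gap (fext f f0) f1' r <= k * (r - 1) ^ 2.
Proof.
  intros Hq Hkc Hk [Hr0 Hr1].
  destruct (Req_dec r 0) as [-> | Hr]; [rewrite tangent_gap_fext0; lra |].
  rewrite tangent_gap_fext by lra.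
  apply (is_kappa_le_endpoint f f1' _ k _ Hconv Hf1 ltac:(lra) Hk); [lra |].
  intros t [Ht | Ht]; [left | right]; lra.
Qed.

Lemma mu_f_set_le_mu_chi2_set (X Y : Type) (Q : X -> R) (W : X -> Y -> R) (qmin k r : R) :
  finite_type X -> pmf Q -> (forall x, 0 < Q x) -> channel W -> (forall y, exists x, 0 < W x y) ->
  0 < qmin < 1 -> (forall x, qmin <= Q x) -> f0 + f1' <= k ->
  is_kappa f f1' (fun t => (0 < t < 1) \/ (1 < t < 1 / qmin)) k ->
  mu_f_set f f0 Q W r -> exists r', mu_chi2_set Q W r' /\ r <= k / (f0 + f1') * r'.
Proof.
  intros [l [Hl Hall]] [HQ0 HQ1] HQpos HW HWy Hq Hqmin Hkc Hk
    [P [PY [QY [DX [DY [[HP0 HP1] [HPY [HQY [HDX [HDX0 [HDY ->]]]]]]]]]]].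
  pose proof (tangent_gap_le_kappa_on_qmin_range qmin k) as Hbound.
  assert (HPQ : forall x, P x <= 1 / qmin * Q x).
  { intros x; pose proof (is_sum_term_le P 1 x HP0 HP1); pose proof (Hqmin x).
    apply (Rmult_le_reg_l qmin); [lra |].
    replace (qmin * (1 / qmin * Q x)) with (Q x) by (field; lra); nra. }
  pose proof (output_is_sum P W PY 1 HP0 HP1 HW HPY) as HPY1.
  pose proof (output_is_sum Q W QY 1 HQ0 HQ1 HW HQY) as HQY1.
  assert (HQYpos : forall y, 0 < QY y) by (intros y; now apply (output_pos Q W)).
  assert (HPratio : forall x, 0 <= P x / Q x <= 1 / qmin)
    by (intros x; apply ratio_bounds_of_le_scal; auto).
  assert (HPYratio : forall y, 0 <= PY y / QY y <= 1 / qmin).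
  { intros y; apply ratio_bounds_of_le_scal; [| apply HQYpos | now apply (output_le_scal P Q W)].
    apply (is_sum_ge0 (fun x => P x * W x y)); [| apply HPY].
    intros x; apply Rmult_le_pos; [apply HP0 | apply HW]. }
  set (CX := sum_list (fun x => (P x - Q x) ^ 2 / Q x) l).
  assert (HCX : chi2 P Q CX) by (apply is_sum_finite; auto; apply chi2_term_ge0, HQpos).
  destruct (chi2_exists_of_ratio_bounded PY QY HQY1 HQYpos (1 / qmin) HPYratio) as [CY HCY].
  assert (HX : DX <= k * CX).
  { apply (fdiv_le_chi2 P Q HP1 HQ1 HQpos (fext f f0) f1' k DX CX HDX HCX).
    intros x; apply Hbound; auto. }
  assert (HXlow : (f0 + f1') * CX <= DX).
  { apply (chi2_le_fdiv P Q HP1 HQ1 HQpos (fext f f0) f1' _ DX CX HDX HCX).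
    intros x; apply tangent_gap_lower, HPratio. }
  assert (HY : DY <= k * CY).
  { apply (fdiv_le_chi2 PY QY HPY1 HQY1 HQYpos (fext f f0) f1' k DY CY HDY HCY).
    intros y; apply Hbound; auto. }
  assert (HCXpos : 0 < CX) by nra.
  exists (CY / CX); split.
  - exists P, PY, QY, CX, CY; repeat split; auto.
  - apply ratio_le_of_bounds; auto; [lra | exact (chi2_ge0 PY QY HQYpos CY HCY)].
Qed.

Lemma mu_f_le_mu_chi2 (X Y : Type) (Q : X -> R) (W : X -> Y -> R) (qmin k mu mu' : R) :
  finite_type X -> pmf Q -> (forall x, 0 < Q x) -> ~ (exists x, Q x = 1) ->
  channel W -> (forall y, exists x, 0 < W x y) ->
  (exists x, Q x = qmin) -> (forall x, qmin <= Q x) ->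
  is_kappa f f1' (fun t => (0 < t < 1) \/ (1 < t < 1 / qmin)) k ->
  is_mu_f f f0 Q W mu -> is_mu_chi2 Q W mu' ->
  mu <= 1 / (f0 + f1') * k * mu'.
Proof.
  intros HX [HQ0 HQ1] HQpos Hnot1 HW HWy [xm Hxm] Hqmin Hk Hmu Hmu'.
  assert (Hq : 0 < qmin < 1).
  { pose proof (is_sum_term_le Q 1 xm HQ0 HQ1); pose proof (HQpos xm).
    destruct (Req_dec (Q xm) 1); [exfalso; eauto | lra]. }
  assert (Hkc : f0 + f1' <= k).
  { apply (is_kappa_ge f f1' _ k _ (1 / 2) Hk); [left; lra | lra |].
    rewrite <- (tangent_gap_fext f f0) by lra; apply tangent_gap_lower; lra. }
  assert (Hkc0 : 0 <= k / (f0 + f1'))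
    by (apply Rmult_le_pos; [lra | apply Rlt_le, Rinv_0_lt_compat; lra]).
  apply (proj2 Hmu); intros r Hr.
  destruct (mu_f_set_le_mu_chi2_set X Y Q W qmin k r HX (conj HQ0 HQ1) HQpos HW HWy Hq Hqmin
              Hkc Hk Hr) as [r' [Hr' Hle]].
  pose proof (proj1 Hmu' r' Hr').
  replace (1 / (f0 + f1') * k * mu') with (k / (f0 + f1') * mu') by (field; lra).
  apply Rle_trans with (k / (f0 + f1') * r'); [exact Hle | now apply Rmult_le_compat_l].
Qed.

End ContractionBounds.

Theorem theorem3 (f : R -> R) (f0 f1' : R)
  (Hconv : convex_pos f)
  (Hder : derivable_pt_lim f 1 f1')
  (Hf1 : f 1 = 0)
  (Hf0 : right_lim0 f f0)
  (Hg : convex_pos (fun t => (f t - f0) / t))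
  (Hpos : 0 < f0 + f1') :
  (forall (X Y : Type) (P Q : X -> R) (W : X -> Y -> R)
     (PY QY : Y -> R) (DX DY CX CY kappa : R),
     countable X -> countable Y ->
     pmf P -> pmf Q ->
     (forall x, 0 < P x) -> (forall x, 0 < Q x) ->
     (exists x, P x <> Q x) ->
     channel W -> (forall y, exists x, 0 < W x y) ->
     output P W PY -> output Q W QY ->
     fdiv f f0 P Q DX -> fdiv f f0 PY QY DY ->
     chi2 P Q CX -> chi2 PY QY CY ->
     is_kappa f f1'
       (fun t => (t < 1 /\ exists x, P x / Q x < t) \/
                 (1 < t /\ exists x, t < P x / Q x)) kappa ->
     DY / DX <= kappa / (f0 + f1') * (CY / CX))
  /\
  (forall (X Y : Type) (Q : X -> R) (W : X -> Y -> R) (qmin kappa mu_f mu_chi : R),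
     finite_type X -> countable Y ->
     pmf Q -> (forall x, 0 < Q x) -> ~ (exists x, Q x = 1) ->
     channel W -> (forall y, exists x, 0 < W x y) ->
     (exists x, Q x = qmin) -> (forall x, qmin <= Q x) ->
     is_kappa f f1' (fun t => (0 < t < 1) \/ (1 < t < 1 / qmin)) kappa ->
     is_mu_f f f0 Q W mu_f -> is_mu_chi2 Q W mu_chi ->
     mu_f <= 1 / (f0 + f1') * kappa * mu_chi).
Proof.
  split.
  - intros X Y P Q W PY QY DX DY CX CY kappa _ _.
    now apply (fdiv_ratio_le_chi2_ratio f f0 f1').
  - intros X Y Q W qmin kappa mu_f mu_chi HX _.
    now apply (mu_f_le_mu_chi2 f f0 f1').
Qed.
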